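(* Let $\mathcal{Q}$ be a family of Boolean constraints. If there exists a polynomial \texttt{upi} encoding for $\mathcal{Q}$, then there exists a polynomial \texttt{upac} encoding for $\mathcal{Q}$. That is: if there is a polynomial $P$ such that every $q\in\mathcal{Q}$ on $n$ variables has a \texttt{upi} \textsc{cnf} encoding of size at most $P(n)$, then there is a polynomial $P'$ such that every $q\in\mathcal{Q}$ on $n$ variables has a \textsc{cnf} encoding of size at most $P'(n)$ that is both \texttt{upi} and \texttt{upac}.
   Context: Assignments: an assignment of a Boolean variable $v$ is $[v,1]$ (also written $[v]$) or $[v,0]$ (also written $[\neg v]$); for a literal $\omega$, $[\omega]$ is the assignment making $\omega$ true. For a set $V$ of Boolean variables, $\mathcal{A}_V$ is the set of complete non-contradictory assignments on $V$ (exactly one value per variable) and $\mathcal{I}_V$ the set of partial non-contradictory assignments (at most one value per variable). $\mathtt{lit}(V)=\bigcup_{v\in V}\{v,\neg v\}$. The size of a \textsc{cnf} formula is the total number of literal occurrences in its clauses. For a \textsc{cnf} formula $\Sigma$ and an assignment $I$, $\Sigma|_I$ is $\Sigma$ together with the unit clause $(v)$ for each $[v,1]\in I$ and $(\neg v)$ for each $[v,0]\in I$. Unit resolution: given an assignment $U$, a clause $c$ is unit w.r.t. $U$ if $U$ falsifies all literals of $c$ except exactly one, its active literal $\omega$. Unit resolution on $\Sigma$ starts with $U=\emptyset$ and repeatedly adds $[\omega]$ for active literals $\omega$ of unit clauses w.r.t. $U$, until $U$ is contradictory (contains $[v,0]$ and $[v,1]$ for some $v$) or nothing new can be added. It ''produces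 the empty clause'' iff $U$ becomes contradictory, and ''infers $[\omega]$'' iff $[\omega]$ is added to $U$. Constraints: a Boolean constraint $q$ on a finite variable set $V$ is any representation of a function $h_q:\mathcal{A}_V\to\{\mathtt{sat},\mathtt{unsat}\}$; $A\in\mathcal{A}_V$ satisfies $q$ iff $h_q(A)=\mathtt{sat}$, otherwise falsifies it. A partial assignment $I\in\mathcal{I}_V$ falsifies $q$ iff every $A\in\mathcal{A}_V$ with $I\subseteq A$ falsifies $q$. A \textsc{cnf} encoding of $q$ is a \textsc{cnf} formula $\Sigma_q$ (possibly with extra variables outside $V$) such that for every $A\in\mathcal{A}_V$, $\Sigma_q|_A$ is satisfiable iff $A$ satisfies $q$. It is \texttt{upi} if for every $I\in\mathcal{I}_V$, unit resolution on $\Sigma_q|_I$ produces the empty clause iff $I$ falsifies $q$. It is \texttt{upac} if for every $I\in\mathcal{I}_V$ that does not falsify $q$ and every literal $\omega\in\mathtt{lit}(V)$ with $[\omega]\notin I$, unit resolution on $\Sigma_q|_I$ does not produce the empty clause, and it infers $[\omega]$ iff $I\cup\{[\neg\omega]\}$ falsifies $q$. An encoding scheme for a family $\mathcal{Q}$ is polynomial if the size of the encoding of each $q\in\mathcal{Q}$ is bounded by a fixed polynomial in the number of variables of $q$. *)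

From mathcomp Require Import all_boot.
Set Implicit Arguments. Unset Strict Implicit. Unset Printing Implicit Defensive.

(* Boolean variables are natural numbers; a literal / an assignment of a
   single variable is a pair [v,b] = (v, b). *)
Definition lit := (nat * bool)%type.
Definition clause := seq lit.
Definition cnf := seq clause.
Definition assignment := seq lit.

Definition neg_lit (l : lit) : lit := (l.1, ~~ l.2).

Definition contradictory (U : assignment) : Prop :=
  exists v, (v, true) \in U /\ (v, false) \in U.

Definition unit_wrt (U : assignment) (c : clause) (w : lit) : Prop :=
  w \in c /\ (forall l, l \in c -> l <> w -> neg_lit l \in U).

Inductive ur_reach (S : cnf) : assignment -> Prop :=
  | ur_start : ur_reach S [::]
  | ur_step U c w :
      ur_reach S U -> ~ contradictory U -> c \in S -> unit_wrt U c w ->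
      w \notin U -> ur_reach S (w :: U).

Definition ur_empty_clause (S : cnf) : Prop :=
  exists U, ur_reach S U /\ contradictory U.

Definition ur_infers (S : cnf) (w : lit) : Prop :=
  exists U, ur_reach S U /\ w \in U.

Definition cnf_restr (S : cnf) (I : assignment) : cnf :=
  S ++ [seq [:: l] | l <- I].

Definition cnf_size (S : cnf) : nat := sumn (map size S).

Definition satisfiable (S : cnf) : Prop :=
  exists A : nat -> bool, forall c, c \in S -> exists2 l, l \in c & A l.1 = l.2.

(* A Boolean constraint on a finite set V of variables: a function h_q on
   complete assignments of V (represented by functions nat -> bool that
   depend only on the values on V). *)
Record constraint := Constraint {
  cvars : seq nat;
  cvars_uniq : uniq cvars;
  ceval : (nat -> bool) -> bool;
  ceval_local : forall A B : nat -> bool, {in cvars, A =1 B} -> ceval A = ceval B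
}.

Definition full_asg (V : seq nat) (A : nat -> bool) : assignment :=
  [seq (v, A v) | v <- V].

Definition partial_on (V : seq nat) (I : assignment) : Prop :=
  (forall l, l \in I -> l.1 \in V) /\ ~ contradictory I.

Definition extends (A : nat -> bool) (I : assignment) : Prop :=
  forall l, l \in I -> A l.1 = l.2.

Definition falsifies (q : constraint) (I : assignment) : Prop :=
  forall A : nat -> bool, extends A I -> ceval q A = false.

Definition is_encoding (q : constraint) (S : cnf) : Prop :=
  forall A : nat -> bool,
    satisfiable (cnf_restr S (full_asg (cvars q) A)) <-> ceval q A = true.

Definition upi (q : constraint) (S : cnf) : Prop :=
  forall I, partial_on (cvars q) I ->
    (ur_empty_clause (cnf_restr S I) <-> falsifies q I).

Definition upac (q : constraint) (S : cnf) : Prop :=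
  forall I, partial_on (cvars q) I -> ~ falsifies q I ->
    ~ ur_empty_clause (cnf_restr S I) /\
    (forall w : lit, w.1 \in cvars q -> w \notin I ->
       (ur_infers (cnf_restr S I) w <-> falsifies q (neg_lit w :: I))).

Definition peval (cs : seq nat) (n : nat) : nat :=
  \sum_(i < size cs) nth 0 cs i * n ^ i.

From mathcomp Require Import all_boot.
From mathcomp Require Import zify.
Set Implicit Arguments. Unset Strict Implicit. Unset Printing Implicit Defensive.

(* Let S be a upi encoding of q on V.  For every literal w on V we add a
   "shadow copy" of S that simulates unit resolution on S|_{¬w}: a fresh
   variable [l]_w per literal l means "l is propagated once ¬w is assumed".
   The copy consists of the unit clause [¬w]_w, the Horn clauses
   [x]_w ∨ ⋁_{l≠x} ¬[¬l]_w for every clause c ∋ x of S, the link clauses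
   ¬l ∨ [l]_w that import the literals of the partial assignment I at hand,
   and the conflict clauses ¬[y]_w ∨ ¬[¬y]_w ∨ w.  If I ∪ {¬w} falsifies q, upi on S makes unit
   resolution on S|_{I,¬w} contradictory; the copy replays it and a
   conflict clause then propagates w.  Conversely the extended formula
   keeps the models of S (a shadow [l]_w is true iff l or w holds), so
   unit resolution stays sound. *)

Definition satisfied_by (B : nat -> bool) (S : cnf) : Prop :=
  forall c, c \in S -> exists2 l, l \in c & B l.1 = l.2.

Lemma neg_litK l : neg_lit (neg_lit l) = l.
Proof. by case: l => v b; rewrite /neg_lit /= negbK. Qed.

Lemma mem_restr S I c :
  c \in cnf_restr S I -> c \in S \/ exists2 l, l \in I & c = [:: l].
Proof.
rewrite /cnf_restr mem_cat => /orP [Hc|/mapP [l Hl ->]]; first by left.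
by right; exists l.
Qed.

Lemma restr_unit_mem S I l : l \in I -> [:: l] \in cnf_restr S I.
Proof. by move=> Hl; rewrite /cnf_restr mem_cat map_f ?orbT. Qed.

Lemma restr_sub S I c : c \in S -> c \in cnf_restr S I.
Proof. by move=> Hc; rewrite /cnf_restr mem_cat Hc. Qed.

Lemma satisfied_restr B S I :
  satisfied_by B (cnf_restr S I) <->
  satisfied_by B S /\ (forall l, l \in I -> B l.1 = l.2).
Proof.
split=> [H | [HS HI] c /mem_restr [/HS // | [l Hl ->]]].
- split=> [c Hc | l Hl]; first exact/H/restr_sub.
  by have [l'] := H _ (restr_unit_mem S Hl); rewrite mem_seq1 => /eqP ->.
- by exists l; [rewrite mem_seq1 | exact: HI].
Qed.

Lemma partial_on_neg_cons V I w : partial_on V I -> w.1 \in V -> w \notin I ->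
  partial_on V (neg_lit w :: I).
Proof.
move=> [HIV HIc] Hw HwI; split=> [l | [u [Ht Hf]]].
  by rewrite inE => /orP [/eqP -> // | /HIV].
move: Ht Hf; rewrite !inE.
case/orP=> [/eqP Ht | Ht]; case/orP=> [/eqP Hf | Hf].
- by move: Ht; rewrite -Hf.
- by move: HwI; rewrite -[w]neg_litK -Ht Hf.
- by move: HwI; rewrite -[w]neg_litK -Hf Ht.
- by apply: HIc; exists u.
Qed.

Section UnitResolution.
Variable S : cnf.

Lemma ur_sound B U :
  satisfied_by B S -> ur_reach S U -> forall l, l \in U -> B l.1 = l.2.
Proof.
move=> HB; elim=> [|U1 c w _ IH _ Hc [Hw Hu] _] l //.
rewrite inE => /orP [/eqP -> | /IH //].
have [l0 Hl0 Hv] := HB c Hc.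
case: (eqVneq l0 w) => [<- //| Hne].
by move: (IH _ (Hu l0 Hl0 (elimN eqP Hne))) => /=; rewrite Hv; case: (l0.2).
Qed.

Lemma ur_sound_consistent B U :
  satisfied_by B S -> ur_reach S U -> ~ contradictory U.
Proof.
move=> HB HU [v [Ht Hf]].
by have /= := ur_sound HB HU Ht; have /= -> := ur_sound HB HU Hf.
Qed.

Lemma ur_reach_subset S' U : {subset S <= S'} -> ur_reach S U -> ur_reach S' U.
Proof.
move=> sub; elim=> [|U1 c w _ IH Hn Hc Hu Hw]; first exact: ur_start.
exact: ur_step IH Hn (sub _ Hc) Hu Hw.
Qed.

Lemma ur_propagate U c x :
  (forall U, ur_reach S U -> ~ contradictory U) -> ur_reach S U ->
  c \in S -> unit_wrt U c x ->
  exists U', [/\ ur_reach S U', {subset U <= U'} & x \in U'].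
Proof.
move=> NC HU Hc Hu; case Hx: (x \in U); first by exists U; split.
exists (x :: U); split; last exact: mem_head.
- by apply: ur_step HU (NC _ HU) Hc Hu _; rewrite Hx.
- by move=> y Hy; rewrite inE Hy orbT.
Qed.

Lemma ur_lit_occurs U l : ur_reach S U -> l \in U -> exists2 c, c \in S & l \in c.
Proof.
elim=> [|U1 c w _ IH _ Hc [Hw _] _] //.
by rewrite inE => /orP [/eqP -> | /IH //]; exists c.
Qed.

End UnitResolution.

Lemma full_asg_mem V A v : v \in V -> (v, A v) \in full_asg V A.
Proof. exact: (map_f (fun v => (v, A v))). Qed.

Section EncodingFacts.
Variables (q : constraint) (T : cnf).
Hypothesis enc : is_encoding q T.

Lemma encoding_model A : ceval q A = true ->
  exists B, satisfied_by B T /\ {in cvars q, B =1 A}.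
Proof.
move=> Hq; have [B /satisfied_restr [HB HV]] := (proj2 (enc A)) Hq.
by exists B; split=> // v Hv; exact: (HV _ (full_asg_mem A Hv)).
Qed.

Lemma encoding_model_restr A I : partial_on (cvars q) I -> extends A I ->
  ceval q A = true ->
  exists B, satisfied_by B (cnf_restr T I) /\ {in cvars q, B =1 A}.
Proof.
move=> HI HA Hq; have [B [HB HV]] := encoding_model Hq.
exists B; split=> //; apply/satisfied_restr; split=> // l Hl.
by rewrite HV ?HA //; exact: HI.1.
Qed.

Lemma ur_empty_sound I : partial_on (cvars q) I ->
  ur_empty_clause (cnf_restr T I) -> falsifies q I.
Proof.
move=> HI [U [HU Hc]] A HA; case Hq: (ceval q A) => //.
have [B [HB _]] := encoding_model_restr HI HA Hq.
by case: (ur_sound_consistent HB HU Hc).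
Qed.

Lemma ur_infers_sound I w : partial_on (cvars q) I -> w.1 \in cvars q ->
  ur_infers (cnf_restr T I) w -> falsifies q (neg_lit w :: I).
Proof.
move=> HI Hw [U [HU HwU]] A HA; case Hq: (ceval q A) => //.
have HAI : extends A I by move=> l Hl; apply: HA; rewrite inE Hl orbT.
have [B [HB HV]] := encoding_model_restr HI HAI Hq.
have := ur_sound HB HU HwU; have /= := HA _ (mem_head _ _).
by rewrite HV // => ->; case: (w.2).
Qed.

End EncodingFacts.

Definition allvars (S : cnf) (V : seq nat) : seq nat :=
  [seq l.1 | l <- flatten S] ++ V.
Definition fresh_base (S : cnf) (V : seq nat) : nat := foldr maxn 0 (allvars S V).

Lemma foldr_maxn_ub (s : seq nat) x : x \in s -> x <= foldr maxn 0 s.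
Proof.
elim: s => //= a s IH; rewrite inE => /orP [/eqP -> | /IH H]; first exact: leq_maxl.
exact: leq_trans H (leq_maxr _ _).
Qed.

(* The shadow variable of literal (x,s) in the copy for w, injectively coded
   above M; the shadow literal [l]_w is its positive literal. *)
Definition shadow_var (M : nat) (w : lit) (x : nat) (s : bool) : nat :=
  M.+1 + CodeSeq.code [:: w.1; nat_of_bool w.2; x; nat_of_bool s].
Definition shadow (M : nat) (w : lit) (l : lit) : lit := (shadow_var M w l.1 l.2, true).

Definition horn_clause M w (c : clause) (x : lit) : clause :=
  shadow M w x :: [seq neg_lit (shadow M w (neg_lit l)) | l <- c & l != x].
Definition horn_copy M w (S : cnf) : cnf :=
  flatten [seq [seq horn_clause M w c x | x <- c] | c <- S].
Definition lits_on (V : seq nat) : seq lit :=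
  flatten [seq [:: (v, true); (v, false)] | v <- V].
Definition conflict_clauses M w (S : cnf) V : cnf :=
  [seq [:: neg_lit (shadow M w (y, true)); neg_lit (shadow M w (y, false)); w]
  | y <- allvars S V].
Definition link_clauses M w V : cnf := [seq [:: neg_lit l; shadow M w l] | l <- lits_on V].
Definition shadow_copy S V M w : cnf :=
  [:: shadow M w (neg_lit w)] :: horn_copy M w S ++ conflict_clauses M w S V
  ++ link_clauses M w V.

Definition upac_ext S V : cnf :=
  S ++ flatten [seq shadow_copy S V (fresh_base S V) w | w <- lits_on V].

Lemma mem_lits_on V l : (l \in lits_on V) = (l.1 \in V).
Proof.
case: l => v b /=; elim: V => //= a V IH.
by rewrite mem_cat IH !inE !xpair_eqE; case: (b); case: (v == a).
Qed.

Lemma nat_of_bool_eq (a b : bool) : (nat_of_bool a == nat_of_bool b) = (a == b).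
Proof. by case: a; case: b. Qed.

Section Extension.
Variables (S : cnf) (V : seq nat).
Local Notation M := (fresh_base S V).
Local Notation shadow_w := (shadow M).

Lemma copy_sub w c : w.1 \in V -> c \in shadow_copy S V M w -> c \in upac_ext S V.
Proof.
move=> Hw Hc; rewrite /upac_ext mem_cat; apply/orP; right.
by apply/flatten_mapP; exists w; rewrite ?mem_lits_on.
Qed.

Lemma fresh_base_S c l : c \in S -> l \in c -> l.1 <= M.
Proof.
move=> Hc Hl; apply: foldr_maxn_ub; rewrite mem_cat map_f //.
by apply/flattenP; exists c.
Qed.

Lemma fresh_base_V v : v \in V -> v <= M.
Proof. by move=> Hv; apply: foldr_maxn_ub; rewrite mem_cat Hv orbT. Qed.

(* The model of the extension induced by a model B0 of S: the shadow of
   (x,s) in the copy for w is true iff B0 satisfies (x,s) or w. *)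
Definition ext_model (B0 : nat -> bool) (n : nat) : bool :=
  if M < n then
    match CodeSeq.decode (n - M.+1) with
    | [:: u; b; y; s] => (nat_of_bool (B0 y) == s) || (nat_of_bool (B0 u) == b)
    | _ => false end
  else B0 n.

Lemma ext_model_shadow B0 w x s :
  ext_model B0 (shadow_var M w x s) = (B0 x == s) || (B0 w.1 == w.2).
Proof.
rewrite /ext_model /shadow_var ifT; last by lia.
by rewrite addKn CodeSeq.codeK !nat_of_bool_eq.
Qed.

Lemma ext_model_small B0 n : n <= M -> ext_model B0 n = B0 n.
Proof. by rewrite /ext_model leqNgt => /negbTE ->. Qed.

(* The Horn clauses of a copy hold: if w fails, the clause of S that B0
   satisfies yields a true literal of each Horn clause. *)
Lemma ext_model_horn B0 w : satisfied_by B0 S ->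
  satisfied_by (ext_model B0) (horn_copy M w S).
Proof.
move=> HB c /flatten_mapP [c0 Hc0 /mapP [x Hx ->]].
have head_sat : ext_model B0 (shadow_w w x).1 = true ->
    exists2 l, l \in horn_clause M w c0 x & ext_model B0 l.1 = l.2.
  by move=> Hs; exists (shadow_w w x); rewrite ?mem_head.
case Hww: (B0 w.1 == w.2); first by apply: head_sat; rewrite /= ext_model_shadow Hww orbT.
have [l0 Hl0 Hv] := HB c0 Hc0.
case: (eqVneq l0 x) => [El | Hne].
  by apply: head_sat; rewrite /= ext_model_shadow -El Hv eqxx.
exists (neg_lit (shadow_w w (neg_lit l0))).
  by rewrite inE; apply/orP; right; apply: map_f; rewrite mem_filter Hne Hl0.
by rewrite /= ext_model_shadow Hww Hv orbF; case: (l0.2).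
Qed.

Lemma ext_model_copy B0 w : satisfied_by B0 S -> w.1 \in V ->
  satisfied_by (ext_model B0) (shadow_copy S V M w).
Proof.
move=> HB Hw c; rewrite /shadow_copy inE !mem_cat.
case/orP=> [/eqP -> | /orP [Hc | /orP [/mapP [y Hy ->] | /mapP [l Hl ->]]]].
- exists (shadow_w w (neg_lit w)); first exact: mem_head.
  by rewrite /= ext_model_shadow; case: (B0 w.1); case: (w.2).
- exact (ext_model_horn HB Hc).
- case Hww: (B0 w.1 == w.2).
    by exists w; rewrite ?inE ?eqxx ?orbT // ext_model_small ?fresh_base_V //; apply/eqP.
  case Hy0: (B0 y).
  + exists (neg_lit (shadow_w w (y, false))); first by rewrite !inE eqxx orbT.
    by rewrite /= ext_model_shadow Hww Hy0.
  + exists (neg_lit (shadow_w w (y, true))); first by rewrite !inE eqxx.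
    by rewrite /= ext_model_shadow Hww Hy0.
- rewrite mem_lits_on in Hl; case H: (B0 l.1 == l.2).
  + by exists (shadow_w w l); rewrite ?inE ?eqxx ?orbT // /= ext_model_shadow H.
  + exists (neg_lit l); first by rewrite !inE eqxx.
    by rewrite /= ext_model_small ?fresh_base_V //; move: H; case: (B0 l.1); case: (l.2).
Qed.

Lemma ext_model_sat B0 : satisfied_by B0 S -> satisfied_by (ext_model B0) (upac_ext S V).
Proof.
move=> HB c; rewrite /upac_ext mem_cat => /orP [Hc | /flatten_mapP [w Hw Hc]].
- have [l Hl Hv] := HB c Hc.
  by exists l; rewrite // ext_model_small // (fresh_base_S Hc Hl).
- by rewrite mem_lits_on in Hw; exact (ext_model_copy HB Hw Hc).
Qed.

(* Simulation: a run of unit resolution on S|_{I,¬w} is replayed by unit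
   resolution on the extension restricted to I, on shadow literals. *)
Definition shadows w (U0 U : assignment) : Prop :=
  forall l, l \in U0 -> shadow_w w l \in U.

Variables (I : assignment) (w : lit).
Hypotheses (Hw : w.1 \in V) (HIV : forall l, l \in I -> l.1 \in V).
Hypothesis NC :
  forall U, ur_reach (cnf_restr (upac_ext S V) I) U -> ~ contradictory U.

Let copy_in c : c \in shadow_copy S V M w -> c \in cnf_restr (upac_ext S V) I.
Proof. by move=> Hc; apply/restr_sub/(copy_sub Hw). Qed.

Lemma shadow_extend U0 U x : shadows w U0 U ->
  (exists U', [/\ ur_reach (cnf_restr (upac_ext S V) I) U',
     {subset U <= U'} & shadow_w w x \in U']) ->
  exists U', ur_reach (cnf_restr (upac_ext S V) I) U' /\ shadows w (x :: U0) U'.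
Proof.
move=> Hsh [U' [HU' sub Hx]]; exists U'; split=> // l.
by rewrite inE => /orP [/eqP -> // | /Hsh /sub].
Qed.

(* The unit clause [¬w]_w and the link clauses propagate the shadows of the
   assumptions ¬w and I. *)
Lemma shadow_assumption U l : ur_reach (cnf_restr (upac_ext S V) I) U ->
  l \in neg_lit w :: I ->
  exists U', [/\ ur_reach (cnf_restr (upac_ext S V) I) U',
     {subset U <= U'} & shadow_w w l \in U'].
Proof.
move=> HU; rewrite inE => /orP [/eqP -> | Hl].
  apply: ur_propagate NC HU _ _; first by apply: copy_in; exact: mem_head.
  by split=> [|l']; rewrite ?mem_seq1 // => /eqP ->.
have [U1 [HU1 sub1 Hin1]] :
    exists U', [/\ ur_reach (cnf_restr (upac_ext S V) I) U', {subset U <= U'} & l \in U'].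
  apply: ur_propagate NC HU (restr_unit_mem _ Hl) _.
  by split=> [|l']; rewrite ?mem_seq1 // => /eqP ->.
have Hlink : [:: neg_lit l; shadow_w w l] \in cnf_restr (upac_ext S V) I.
  apply: copy_in; rewrite /shadow_copy inE !mem_cat map_f ?orbT //.
  by rewrite mem_lits_on HIV.
have Hunit : unit_wrt U1 [:: neg_lit l; shadow_w w l] (shadow_w w l).
  split=> [|l']; first by rewrite !inE eqxx orbT.
  by rewrite !inE => /orP [/eqP -> | /eqP -> []] //; rewrite neg_litK.
have [U2 [HU2 sub2 Hin2]] := ur_propagate NC HU1 Hlink Hunit.
by exists U2; split=> // y /sub1 /sub2.
Qed.

Lemma simulate U0 : ur_reach (cnf_restr S (neg_lit w :: I)) U0 ->
  exists U, ur_reach (cnf_restr (upac_ext S V) I) U /\ shadows w U0 U.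
Proof.
elim=> [|U1 c x _ [U [HU Hsh]] _ Hc [Hx Hu] _]; first by exists [::]; split=> //; exact: ur_start.
apply: (shadow_extend Hsh); case/mem_restr: Hc => [Hc | [l Hl Ec]].
- have Hhorn : horn_clause M w c x \in cnf_restr (upac_ext S V) I.
    apply: copy_in; rewrite /shadow_copy inE mem_cat; apply/orP; right.
    by apply/orP; left; apply/flatten_mapP; exists c => //; exact: map_f.
  apply: ur_propagate NC HU Hhorn _; split=> [|l']; first exact: mem_head.
  rewrite inE => /orP [/eqP -> // | /mapP [l Hl ->]] _.
  rewrite mem_filter in Hl; case/andP: Hl => Hlx Hlc.
  by rewrite neg_litK; apply/Hsh/Hu => //; exact/eqP.
- by move: Hx; rewrite Ec mem_seq1 => /eqP ->; exact: shadow_assumption.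
Qed.

Lemma ur_vars_allvars U0 l : ur_reach (cnf_restr S (neg_lit w :: I)) U0 ->
  l \in U0 -> l.1 \in allvars S V.
Proof.
move=> HU0 /(ur_lit_occurs HU0) [c /mem_restr [Hc Hl | [l' Hl' -> ]]].
  by rewrite mem_cat map_f //; apply/flattenP; exists c.
rewrite mem_seq1 => /eqP ->; rewrite mem_cat; apply/orP; right.
by move: Hl'; rewrite inE => /orP [/eqP -> | /HIV].
Qed.

Lemma conflict_infers :
  ur_empty_clause (cnf_restr S (neg_lit w :: I)) ->
  ur_infers (cnf_restr (upac_ext S V) I) w.
Proof.
move=> [U0 [HU0 [v [Ht Hf]]]]; have [U [HU Hsh]] := simulate HU0.
have Hcc : [:: neg_lit (shadow_w w (v, true)); neg_lit (shadow_w w (v, false)); w]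
    \in cnf_restr (upac_ext S V) I.
  apply: copy_in; rewrite /shadow_copy inE !mem_cat map_f ?orbT //.
  exact: (ur_vars_allvars HU0 Ht).
have Hunit : unit_wrt U [:: neg_lit (shadow_w w (v, true));
                           neg_lit (shadow_w w (v, false)); w] w.
  split=> [|l']; first by rewrite !inE eqxx !orbT.
  rewrite !inE => /orP [/eqP -> _ | /orP [/eqP -> _ | /eqP -> []]] //.
  - by rewrite neg_litK; exact: Hsh.
  - by rewrite neg_litK; exact: Hsh.
have [U' [HU' _ Hin]] := ur_propagate NC HU Hcc Hunit.
by exists U'.
Qed.

End Extension.

Section Correctness.
Variables (q : constraint) (S : cnf).
Hypotheses (enc : is_encoding q S) (up : upi q S).
Local Notation V := (cvars q).

(* The extension still encodes q: it adds fresh variables only, and every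
   model of S extends to it. *)
Lemma upac_ext_encoding : is_encoding q (upac_ext S V).
Proof.
move=> A; split.
- move=> [B /satisfied_restr [HB HA]]; apply/(enc A); exists B.
  apply/satisfied_restr; split=> // c Hc; apply: HB; by rewrite /upac_ext mem_cat Hc.
- move=> Hq; have [B0 [HB0 HV]] := encoding_model enc Hq.
  exists (ext_model S V B0); apply/satisfied_restr; split; first exact: ext_model_sat.
  move=> l /mapP [v Hv ->] /=.
  by rewrite ext_model_small ?fresh_base_V ?HV.
Qed.

(* upi is preserved: unit resolution on S|_I runs unchanged on the extension. *)
Lemma upac_ext_upi : upi q (upac_ext S V).
Proof.
move=> I HI; split; first exact: (ur_empty_sound upac_ext_encoding HI).
move=> /(proj2 (up HI)) [U [HU Hc]]; exists U; split=> //.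
apply: ur_reach_subset HU => c /mem_restr [Hc' | [l Hl ->]].
- by apply: restr_sub; rewrite /upac_ext mem_cat Hc'.
- exact: restr_unit_mem.
Qed.

(* upac: soundness comes from the encoding property; completeness from upi
   on S|_{I,¬w} and conflict_infers. *)
Lemma upac_ext_upac : upac q (upac_ext S V).
Proof.
move=> I HI Hnf.
have NC : ~ ur_empty_clause (cnf_restr (upac_ext S V) I).
  by move/(ur_empty_sound upac_ext_encoding HI).
split=> // w Hw HwI; split; first exact: (ur_infers_sound upac_ext_encoding HI Hw).
move=> Hfal; apply: (conflict_infers Hw HI.1).
- by move=> U HU Hc; apply: NC; exists U.
- exact/(up (partial_on_neg_cons HI Hw HwI)).
Qed.

End Correctness.

Lemma cnf_size_cat a b : cnf_size (a ++ b) = cnf_size a + cnf_size b.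
Proof. by rewrite /cnf_size map_cat sumn_cat. Qed.

Lemma cnf_size_flatten (ss : seq cnf) : cnf_size (flatten ss) = sumn (map cnf_size ss).
Proof. by elim: ss => //= s ss IH; rewrite cnf_size_cat IH. Qed.

Lemma sumn_map_le (T : eqType) (f g : T -> nat) xs :
  (forall x, x \in xs -> f x <= g x) -> sumn (map f xs) <= sumn (map g xs).
Proof.
elim: xs => //= a xs IH H; rewrite leq_add ?H ?mem_head //.
by apply: IH => x Hx; apply: H; rewrite inE Hx orbT.
Qed.

Lemma sumn_map_const_le (T : eqType) (f : T -> nat) xs K :
  (forall x, x \in xs -> f x <= K) -> sumn (map f xs) <= size xs * K.
Proof.
move=> H; apply: leq_trans (sumn_map_le (g := fun=> K) H) _.
by elim: xs {H} => //= a xs IH; rewrite mulSn leq_add2l.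
Qed.

Lemma size_lits_on V : size (lits_on V) = 2 * size V.
Proof. by elim: V => //= a V IH; rewrite -/(lits_on V) IH; lia. Qed.

Lemma size_allvars S V : size (allvars S V) = cnf_size S + size V.
Proof. by rewrite /allvars size_cat size_map size_flatten. Qed.

(* Each clause c contributes |c| Horn clauses of size |c|. *)
Lemma horn_copy_size M w S : cnf_size (horn_copy M w S) <= cnf_size S * (cnf_size S).+1.
Proof.
have sq : sumn [seq size c * (size c).+1 | c <- S] <= cnf_size S * (cnf_size S).+1.
  by elim: S => //= c S IH; rewrite /cnf_size /= -/(cnf_size S); nia.
rewrite /horn_copy cnf_size_flatten -map_comp; apply: leq_trans sq.
apply: sumn_map_le => c _ /=; rewrite /cnf_size -map_comp.
apply: sumn_map_const_le => x _ /=.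
by rewrite size_map ltnS size_filter count_size.
Qed.

Definition copy_bound (s n : nat) : nat := 1 + s * s.+1 + 3 * (s + n) + 4 * n.

Lemma shadow_copy_size S V M w :
  cnf_size (shadow_copy S V M w) <= copy_bound (cnf_size S) (size V).
Proof.
have Hconf : cnf_size (conflict_clauses M w S V) <= 3 * (cnf_size S + size V).
  rewrite /conflict_clauses /cnf_size -map_comp mulnC -size_allvars.
  exact: sumn_map_const_le.
have Hlink : cnf_size (link_clauses M w V) <= 4 * size V.
  rewrite /link_clauses /cnf_size -map_comp.
  have -> : 4 * size V = size (lits_on V) * 2 by rewrite size_lits_on; lia.
  exact: sumn_map_const_le.
have Hsplit : cnf_size (shadow_copy S V M w) = 1 + (cnf_size (horn_copy M w S)
    + (cnf_size (conflict_clauses M w S V) + cnf_size (link_clauses M w V))).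
  by rewrite /shadow_copy /cnf_size /= -!/(cnf_size _) !cnf_size_cat.
have := horn_copy_size M w S; rewrite Hsplit /copy_bound; lia.
Qed.

Definition ext_bound (s n : nat) : nat := s + (2 * n) * copy_bound s n.

Lemma upac_ext_size S V : cnf_size (upac_ext S V) <= ext_bound (cnf_size S) (size V).
Proof.
rewrite /upac_ext cnf_size_cat cnf_size_flatten -map_comp leq_add2l -size_lits_on.
apply: sumn_map_const_le => w _ /=; exact: shadow_copy_size.
Qed.

Lemma ext_bound_mono s s' n : s <= s' -> ext_bound s n <= ext_bound s' n.
Proof. by rewrite /ext_bound /copy_bound => H; nia. Qed.

Lemma peval_le_power P n :
  peval P n <= (\sum_(i < size P) nth 0 P i) * n.+1 ^ (size P).
Proof.
rewrite /peval big_distrl; apply: leq_sum => i _ /=; apply: leq_mul => //.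
apply: leq_trans (leq_pexp2l _ (ltnW (ltn_ord i))) => //.
by case: (posnP i) => [-> //|Hi]; rewrite leq_exp2r.
Qed.

Lemma ext_bound_power c d n :
  ext_bound (c * n.+1 ^ d) n <= 25 * (c.+1 ^ 2) * n.+1 ^ (2 * d + 2).
Proof.
have -> : n.+1 ^ (2 * d + 2) = n.+1 ^ d * n.+1 ^ d * (n.+1 * n.+1).
  by rewrite -expnD mulnn -expnD; congr (_ ^ _); lia.
have : 0 < n.+1 ^ d by rewrite expn_gt0.
rewrite /ext_bound /copy_bound; set X := n.+1 ^ d => HX.
have -> : 25 * c.+1 ^ 2 * (X * X * (n.+1 * n.+1))
    = 25 * (c.+1 * X * (c.+1 * X)) * (n.+1 * n.+1) by nia.
have hY1 : c * X <= c.+1 * X by nia.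
have hY2 : 1 <= c.+1 * X by nia.
have : c * X * (c * X).+1 <= c.+1 * X * (c.+1 * X) by apply: leq_mul; nia.
move: hY1 hY2; generalize (c * X) (c.+1 * X) => s y; nia.
Qed.

Lemma power_le_peval_const n D :
  n.+1 ^ D <= peval (nseq D.+1 (2 ^ D)) n.
Proof.
have peval_const C k : peval (nseq k.+1 C) n = C * \sum_(i < k.+1) n ^ i.
  rewrite /peval big_distrr size_nseq; apply: eq_bigr => i _.
  by rewrite nth_nseq ltn_ord.
rewrite peval_const; elim: D => [|D IH]; first by rewrite big_ord_recl big_ord0.
have Hrec : \sum_(i < D.+2) n ^ i = 1 + n * \sum_(i < D.+1) n ^ i.
  by rewrite big_ord_recl big_distrr; congr (_ + _); apply: eq_bigr => i _; rewrite expnS.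
have Hmono : \sum_(i < D.+1) n ^ i <= \sum_(i < D.+2) n ^ i.
  by rewrite [X in _ <= X]big_ord_recr leq_addr.
move: IH Hrec Hmono; rewrite !expnS.
generalize (n.+1 ^ D) (2 ^ D) (\sum_(i < D.+1) n ^ i) (\sum_(i < D.+2) n ^ i).
move=> p t g g' IH Hrec Hmono; nia.
Qed.

Lemma peval_scale C P n : peval [seq C * a | a <- P] n = C * peval P n.
Proof.
rewrite /peval size_map big_distrr; apply: eq_bigr => i _.
by rewrite (nth_map 0) /= ?mulnA.
Qed.

Definition ext_poly (P : seq nat) : seq nat :=
  let D := 2 * size P + 2 in
  [seq 25 * (\sum_(i < size P) nth 0 P i).+1 ^ 2 * a | a <- nseq D.+1 (2 ^ D)].

Lemma upac_ext_poly_size S V P : cnf_size S <= peval P (size V) ->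
  cnf_size (upac_ext S V) <= peval (ext_poly P) (size V).
Proof.
move=> sz; set n := size V; set c := \sum_(i < size P) nth 0 P i.
apply: leq_trans (upac_ext_size S V) _.
apply: leq_trans (ext_bound_mono n (leq_trans sz (peval_le_power P n))) _.
apply: leq_trans (ext_bound_power c (size P) n) _.
by rewrite peval_scale leq_mul2l power_le_peval_const orbT.
Qed.

Theorem mainTheorem3 (Q : constraint -> Prop) :
  (exists P : seq nat, forall q, Q q ->
     exists S : cnf, is_encoding q S /\ upi q S /\
       cnf_size S <= peval P (size (cvars q))) ->
  (exists P' : seq nat, forall q, Q q ->
     exists S : cnf, is_encoding q S /\ upi q S /\ upac q S /\
       cnf_size S <= peval P' (size (cvars q))).
Proof.
move=> [P HP]; exists (ext_poly P) => q Qq.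
have [S [enc [up sz]]] := HP q Qq.
exists (upac_ext S (cvars q)); split; first exact: upac_ext_encoding.
split; first exact: upac_ext_upi.
split; first exact: upac_ext_upac.
exact: upac_ext_poly_size.
Qed.
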